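(* Let $\bm\Phi\in\mathbb{R}^{N\times N}$, and for hyperparameters $\bm\beta\in B$ let $\mathcal{O}_{\bm\beta}\in\mathbb{R}^{N\times N}$ be symmetric positive definite, with $\mathbf{K}_{\bm\beta}=\bm\Phi\mathcal{O}_{\bm\beta}\bm\Phi^\top$. Parametrize $\bm\rho=(\tilde\gamma,\bm\beta,\sigma^2)\in(0,\infty)\times B\times(0,\infty)$ with $\tilde\gamma=\gamma\sigma^2$, and set $\mathbf{S}_{\bm\rho}=\mathbf{K}_{\bm\beta}/\gamma+\sigma^2\mathbf{I}$. Let $\bar{\mathbf{Q}}\in\mathbb{R}^{N\times N}$ be symmetric positive definite. Take factorizations $\mathcal{O}_{\bm\beta}/\tilde\gamma=\mathbf{L}_{\bm\rho}\mathbf{L}_{\bm\rho}^\top$ and $\bar{\mathbf{Q}}=\mathbf{C}\mathbf{C}^\top$ with $\mathbf{L}_{\bm\rho},\mathbf{C}$ triangular with positive diagonal, and a QR factorization $$\begin{bmatrix}\bm\Phi\mathbf{L}_{\bm\rho}&\mathbf{C}\\ \mathbf{I}&\mathbf{0}\end{bmatrix}=\mathbf{Q}_{\bm\rho}\begin{bmatrix}\mathbf{R}_{1,\bm\rho}&\mathbf{R}_{2,\bm\rho}\\ \mathbf{0}&\mathbf{R}_{3,\bm\rho}\end{bmatrix},$$ with $\mathbf{Q}_{\bm\rho}$ orthogonal and $\mathbf{R}_{1,\bm\rho},\mathbf{R}_{3,\bm\rho}\in\mathbb{R}^{N\times N}$ upper triangular with positive diagonal ($\mathbf{R}_{1,\bm\rho},\mathbf{R}_{2,\bm\rho}$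 depend only on $(\tilde\gamma,\bm\beta)$). Then $\|\mathbf{C}\|_F^2-\|\mathbf{R}_{2,\bm\rho}\|_F^2>0$, and $(\tilde\gamma^*,\bm\beta^*,\sigma^{2*})$ minimizes $f(\bm\rho)=\log\det(\mathbf{S}_{\bm\rho})+\mathrm{tr}\{\mathbf{S}_{\bm\rho}^{-1}\bar{\mathbf{Q}}\}$ over $(0,\infty)\times B\times(0,\infty)$ if and only if $$(\tilde\gamma^*,\bm\beta^* )\in\arg\min_{\tilde\gamma>0,\bm\beta\in B}\Big(N\log\big(\|\mathbf{C}\|_F^2-\|\mathbf{R}_{2,\bm\rho}\|_F^2\big)+2\log\det(\mathbf{R}_{1,\bm\rho})\Big)$$ and $\sigma^{2*}=\frac1N\big(\|\mathbf{C}\|_F^2-\|\mathbf{R}_{2,\bm\rho^*}\|_F^2\big)$.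
   Context: $\|\cdot\|_F$ denotes the Frobenius norm. In the paper, $\bar{\mathbf{Q}}$ is the conditional second moment $\bar{\mathbf{Q}}^{(j)}$ of the unquantized output at the current EM iterate, and the claim gives an equivalent form of the EM M-step $\arg\min_{\bm\rho}(\log\det\mathbf{S}_{\bm\rho}+\mathrm{tr}\{\mathbf{S}_{\bm\rho}^{-1}\bar{\mathbf{Q}}^{(j)}\})$ for Empirical Bayes hyperparameter estimation. *)

From mathcomp Require Import all_boot all_order all_algebra.
From mathcomp Require Import all_classical all_reals all_analysis.
Set Implicit Arguments. Unset Strict Implicit. Unset Printing Implicit Defensive.
Import Order.TTheory GRing.Theory Num.Theory.
Local Open Scope ring_scope.

Section Defs.
Variable R : realType.

Definition spd n (A : 'M[R]_n) : Prop :=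
  A^T = A /\ forall x : 'cV[R]_n, x != 0 -> 0 < (x^T *m A *m x) ord0 ord0.

Definition trig_posdiag n (A : 'M[R]_n) : Prop :=
  (is_trig_mx A \/ is_trig_mx A^T) /\ forall i, 0 < A i i.

Definition upper_posdiag n (A : 'M[R]_n) : Prop :=
  is_trig_mx A^T /\ forall i, 0 < A i i.

Definition orthogonal_mx n (Q : 'M[R]_n) : Prop := Q^T *m Q = 1%:M.

Definition frob m n (A : 'M[R]_(m, n)) : R :=
  Num.sqrt (\sum_i \sum_j A i j ^+ 2).

(* S_rho with gamma = gt / s2, i.e. K/gamma + s2 I *)
Definition Smat n (K : 'M[R]_n) (gt s2 : R) : 'M[R]_n :=
  (gt / s2)^-1 *: K + s2%:M.

Definition emf n (K Qbar : 'M[R]_n) (gt s2 : R) : R :=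
  ln (\det (Smat K gt s2)) + \tr (invmx (Smat K gt s2) *m Qbar).

End Defs.

From mathcomp Require Import all_boot all_order all_algebra.
From mathcomp Require Import all_classical all_reals all_analysis.
From mathcomp Require Import ring lra.
Import Order.TTheory GRing.Theory Num.Theory.
Set Implicit Arguments. Unset Strict Implicit. Unset Printing Implicit Defensive.
Local Open Scope ring_scope.

(* Write A := Phi L, so that gt^-1 O = L L^T gives S = s2 (I + A A^T).
   The QR factorization of [A C; I 0] yields, by comparing Gram matrices,
     R1^T R1 = A^T A + I,   R1^T R2 = A^T C,   R2^T R2 + R3^T R3 = C^T C.
   Hence
   - det S = s2^N det(I + A^T A) = s2^N (det R1)^2   (Sylvester's identity);
   - tr(S^-1 Qbar) = (|C|_F^2 - |R2|_F^2) / s2, using the push-through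
     identity (I + A A^T)^-1 = I - A (A^T A + I)^-1 A^T;
   - |C|_F^2 - |R2|_F^2 = |R3|_F^2 > 0, as R3 has a positive diagonal.
   So f(gt, beta, s2) = N ln s2 + 2 ln det R1 + c(gt, beta) / s2 with c > 0.
   For fixed c the map s |-> N ln s + c / s has the unique minimizer c / N,
   where it equals N ln c + (N - N ln N); minimizing over s2 first therefore
   turns the joint minimization of f into the minimization of
   g = N ln c + 2 ln det R1, which is the theorem. *)

Section Profile.
Variable R : realType.

Lemma ln_le_subr1 (t : R) : 0 < t -> ln t <= t - 1.
Proof.
move=> t0; have := expR_ge1Dx (ln t); rewrite lnK ?posrE //; lra.
Qed.

Lemma ln_lt_subr1 (t : R) : 0 < t -> t != 1 -> ln t < t - 1.
Proof.
move=> t0 t1; have ln_neq0 : ln t != 0 by rewrite ln_eq0.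
have := expR_gt1Dx ln_neq0; rewrite lnK ?posrE //; lra.
Qed.

Lemma profile_gap (n c s : R) : 0 < n -> 0 < c -> 0 < s ->
  n * ln s + c / s - (n * ln (c / n) + n)
  = n * (c / (n * s) - 1 - ln (c / (n * s))).
Proof.
move=> n0 c0 s0; set t := c / (n * s).
have t0 : 0 < t by rewrite divr_gt0 // mulr_gt0.
have -> : c / n = t * s by rewrite /t; field; rewrite !gt_eqF.
have -> : c / s = n * t by rewrite /t; field; rewrite !gt_eqF.
by rewrite lnM ?posrE //; ring.
Qed.

Lemma profile_lb (n c s : R) : 0 < n -> 0 < c -> 0 < s ->
  n * ln (c / n) + n <= n * ln s + c / s.
Proof.
move=> n0 c0 s0; rewrite -Num.Theory.subr_ge0 profile_gap //.
have t0 : 0 < c / (n * s) by rewrite divr_gt0 // mulr_gt0.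
by apply: mulr_ge0; [exact: ltW | have := ln_le_subr1 t0; lra].
Qed.

Lemma profile_argmin_eq (n c s : R) : 0 < n -> 0 < c -> 0 < s ->
  n * ln s + c / s <= n * ln (c / n) + n -> s = c / n.
Proof.
move=> n0 c0 s0; rewrite -Num.Theory.subr_le0 profile_gap // => gap_le0.
have t0 : 0 < c / (n * s) by rewrite divr_gt0 // mulr_gt0.
have /eqP t1 : c / (n * s) == 1.
  apply/negPn/negP => t_neq1.
  have gap_gt0 : 0 < n * (c / (n * s) - 1 - ln (c / (n * s))).
    by apply: mulr_gt0 => //; have := ln_lt_subr1 t0 t_neq1; lra.
  by move: gap_le0; rewrite leNgt gap_gt0.
by rewrite (divr1_eq t1); field; rewrite gt_eqF.
Qed.

Lemma profile_argmin (X : Type) (D : X -> Prop) (n : R) (h c : X -> R)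
    (F : X -> R -> R) :
  0 < n -> (forall x, D x -> 0 < c x) ->
  (forall x s, D x -> 0 < s -> F x s = n * ln s + h x + c x / s) ->
  forall xs ss, D xs -> 0 < ss ->
  (forall x s, D x -> 0 < s -> F xs ss <= F x s) <->
  ((forall x, D x -> n * ln (c xs) + h xs <= n * ln (c x) + h x) /\
   ss = n^-1 * c xs).
Proof.
move=> n0 c_gt0 F_eq.
pose m := n - n * ln n.
have F_lb x s : D x -> 0 < s -> n * ln (c x) + h x + m <= F x s.
  move=> Dx s0; have := profile_lb n0 (c_gt0 x Dx) s0.
  by rewrite F_eq // ln_div ?posrE ?c_gt0 // /m; lra.
have F_min x : D x -> F x (c x / n) = n * ln (c x) + h x + m.
  move=> Dx; have cx0 := c_gt0 x Dx.
  rewrite F_eq ?divr_gt0 // ln_div ?posrE // /m.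
  have -> : c x / (c x / n) = n by field; rewrite !gt_eqF.
  ring.
have F_argmin x s : D x -> 0 < s -> F x s <= n * ln (c x) + h x + m ->
    s = c x / n.
  move=> Dx s0 F_le; apply: (profile_argmin_eq n0 (c_gt0 x Dx) s0).
  by move: F_le; rewrite F_eq // ln_div ?posrE ?c_gt0 // /m; lra.
move=> xs ss Dxs ss0; split => [F_ge | [g_ge ->]].
  have ss_eq : ss = c xs / n.
    apply: F_argmin => //; rewrite -F_min //.
    by apply: F_ge; rewrite ?divr_gt0 ?c_gt0.
  split; last by rewrite ss_eq mulrC.
  move=> x Dx; have := F_ge x (c x / n) Dx (divr_gt0 (c_gt0 x Dx) n0).
  by rewrite F_min //; have := F_lb xs ss Dxs ss0; lra.
move=> x s Dx s0; rewrite mulrC F_min //.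
by have := F_lb x s Dx s0; have := g_ge x Dx; lra.
Qed.

End Profile.

Section MatrixIdentities.
Variable R : realType.

Lemma frob_sqr m n (A : 'M[R]_(m, n)) : frob A ^+ 2 = \tr (A^T *m A).
Proof.
rewrite /frob sqr_sqrtr; last first.
  by apply: sumr_ge0 => i _; apply: sumr_ge0 => j _; exact: sqr_ge0.
rewrite /mxtrace; under [RHS]eq_bigr do rewrite mxE.
rewrite exchange_big; apply: eq_bigr => i _; apply: eq_bigr => j _.
by rewrite !mxE expr2.
Qed.

Lemma frob_sqr_gt0 m n (A : 'M[R]_(m, n)) i0 j0 :
  A i0 j0 != 0 -> 0 < frob A ^+ 2.
Proof.
move=> A_neq0.
rewrite frob_sqr /mxtrace (bigD1 j0) //= ltr_pwDl //; last first.
  apply: sumr_ge0 => j _; rewrite mxE.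
  by apply: sumr_ge0 => i _; rewrite !mxE -expr2 sqr_ge0.
rewrite mxE (bigD1 i0) //= ltr_pwDl //.
  by rewrite !mxE -expr2 exprn_even_gt0 // A_neq0 orbT.
by apply: sumr_ge0 => i _; rewrite !mxE -expr2 sqr_ge0.
Qed.

Lemma det_1Dmul m n (A : 'M[R]_(m, n)) (B : 'M[R]_(n, m)) :
  \det (1%:M + A *m B) = \det (1%:M + B *m A).
Proof.
have lower : block_mx (1%:M + A *m B) (- A) 0 1%:M *m block_mx 1%:M 0 B 1%:M
             = block_mx 1%:M (- A) B 1%:M.
  rewrite mulmx_block ?mulmx1 ?mul1mx ?mulmx0 ?mul0mx ?addr0 ?add0r.
  by rewrite mulNmx addrK.
have upper : block_mx 1%:M 0 B 1%:M *m block_mx 1%:M (- A) 0 (1%:M + B *m A)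
             = block_mx 1%:M (- A) B 1%:M.
  rewrite mulmx_block ?mulmx1 ?mul1mx ?mulmx0 ?mul0mx ?addr0 ?add0r.
  by rewrite mulmxN addrC addrK.
have := congr1 determinant upper.
rewrite -lower !det_mulmx ?det_ublock ?det_lblock ?det1.
by rewrite !mul1r !mulr1 => ->.
Qed.

Lemma det_upper_posdiag_gt0 n (A : 'M[R]_n) : upper_posdiag A -> 0 < \det A.
Proof.
case=> trigA diagA; rewrite -det_tr det_trig //.
by apply: prodr_gt0 => i _; rewrite mxE.
Qed.

Lemma invmx_right n (A B : 'M[R]_n) : A *m B = 1%:M -> invmx A = B.
Proof.
move=> AB1; have [uA _] := mulmx1_unit AB1.
by rewrite -[invmx A]mulmx1 -AB1 mulmxA mulVmx // mul1mx.
Qed.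

Lemma invmx_1Dgram m n (A : 'M[R]_(m, n)) : A^T *m A + 1%:M \in unitmx ->
  invmx (1%:M + A *m A^T) = 1%:M - A *m invmx (A^T *m A + 1%:M) *m A^T.
Proof.
move=> uG; apply: invmx_right.
have shift : (1%:M + A *m A^T) *m A = A *m (A^T *m A + 1%:M).
  by rewrite mulmxDl mulmxDr mul1mx mulmx1 mulmxA addrC.
rewrite mulmxBr mulmx1 !mulmxA shift -(mulmxA A) mulmxV // mulmx1.
by rewrite addrK.
Qed.

Lemma qr_gram n m k (Q : 'M[R]_(n + m)) (A : 'M[R]_(n, m)) (C : 'M[R]_(n, k))
    (R1 : 'M[R]_(n, m)) (R2 : 'M[R]_(n, k)) (R3 : 'M[R]_(m, k)) :
  orthogonal_mx Q ->
  block_mx A C 1%:M 0 = Q *m block_mx R1 R2 0 R3 ->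
  [/\ R1^T *m R1 = A^T *m A + 1%:M, R1^T *m R2 = A^T *m C &
      R2^T *m R2 + R3^T *m R3 = C^T *m C].
Proof.
move=> orthQ E.
have : (block_mx A C 1%:M 0)^T *m block_mx A C 1%:M 0
     = (block_mx R1 R2 0 R3)^T *m block_mx R1 R2 0 R3.
  by rewrite E trmx_mul mulmxA -(mulmxA _ Q^T) orthQ mulmx1.
rewrite !tr_block_mx !mulmx_block !trmx0 trmx1.
rewrite ?mulmx1 ?mul1mx ?mulmx0 ?mul0mx ?addr0 ?add0r.
by case/eq_block_mx => -> -> _ ->.
Qed.

Lemma trace_inv_1Dgram n m k (A : 'M[R]_(n, m)) (C : 'M[R]_(n, k))
    (R1 : 'M[R]_m) (R2 : 'M[R]_(m, k)) : R1 \in unitmx ->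
  R1^T *m R1 = A^T *m A + 1%:M -> R1^T *m R2 = A^T *m C ->
  \tr (invmx (1%:M + A *m A^T) *m (C *m C^T)) = \tr (C^T *m C) - \tr (R2^T *m R2).
Proof.
move=> uR1 gram1 gram2.
have uR1T : R1^T \in unitmx by rewrite unitmx_tr.
have uG : A^T *m A + 1%:M \in unitmx by rewrite -gram1 unitmx_mul uR1T uR1.
have inv_gram : invmx (A^T *m A + 1%:M) = invmx R1 *m invmx R1^T.
  apply: invmx_right.
  by rewrite -gram1 mulmxA -(mulmxA R1^T) mulmxV // mulmx1 mulmxV.
have gram2T : C^T *m A = R2^T *m R1.
  by rewrite -[LHS]trmxK trmx_mul trmxK -gram2 trmx_mul trmxK.
have proj : C^T *m (A *m invmx (A^T *m A + 1%:M) *m A^T) *m C = R2^T *m R2.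
  rewrite inv_gram !mulmxA gram2T -(mulmxA (R2^T) R1) mulmxV // mulmx1.
  by rewrite -!mulmxA -gram2 (mulmxA (invmx R1^T)) mulVmx // mul1mx.
rewrite (invmx_1Dgram uG) mulmxA mxtrace_mulC mulmxA mulmxBr mulmx1 mulmxBl.
by rewrite proj linearB.
Qed.

Lemma Smat_scale n (K : 'M[R]_n) (gt s2 : R) :
  Smat K gt s2 = s2 *: (1%:M + gt^-1 *: K).
Proof.
by rewrite /Smat scalerDr scalemx1 scalerA invfM invrK mulrC addrC.
Qed.

Lemma emf_profile n (Phi O Qbar C L R1 R2 R3 : 'M[R]_n) (Q : 'M[R]_(n + n))
    (gt s2 : R) :
  0 < s2 -> Qbar = C *m C^T -> gt^-1 *: O = L *m L^T ->
  orthogonal_mx Q -> upper_posdiag R1 ->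
  block_mx (Phi *m L) C 1%:M 0 = Q *m block_mx R1 R2 0 R3 ->
  emf (Phi *m O *m Phi^T) Qbar gt s2
   = n%:R * ln s2 + 2 * ln (\det R1) + (frob C ^+ 2 - frob R2 ^+ 2) / s2.
Proof.
move=> s2_gt0 Qbar_eq L_fact orthQ R1_up E.
set A := Phi *m L.
have [gram1 gram2 _] := qr_gram orthQ E.
have detR1_gt0 := det_upper_posdiag_gt0 R1_up.
have uR1 : R1 \in unitmx by rewrite unitmxE unitfE gt_eqF.
have S_eq : Smat (Phi *m O *m Phi^T) gt s2 = s2 *: (1%:M + A *m A^T).
  rewrite Smat_scale scalemxAl scalemxAr L_fact.
  by rewrite /A trmx_mul !mulmxA.
have det_1Dgram : \det (1%:M + A *m A^T) = \det R1 * \det R1.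
  by rewrite det_1Dmul addrC -gram1 det_mulmx det_tr.
have uS : s2 *: (1%:M + A *m A^T) \in unitmx.
  by rewrite unitmxE unitfE detZ det_1Dgram mulf_neq0 ?expf_neq0 ?gt_eqF ?mulr_gt0.
rewrite /emf S_eq detZ det_1Dgram invmxZ // -(scalemxAl (s2^-1)) mxtraceZ.
rewrite lnM ?posrE ?exprn_gt0 ?mulr_gt0 // lnXn // lnM ?posrE //.
rewrite Qbar_eq (trace_inv_1Dgram uR1 gram1 gram2) -!frob_sqr -mulr_natl.
by field; rewrite gt_eqF.
Qed.

(* From the last Gram identity, |C|_F^2 - |R2|_F^2 = |R3|_F^2, which is
   positive as soon as R3 has a nonzero entry. *)
Lemma frob_gap_gt0 n m k (C : 'M[R]_(n, k)) (R2 : 'M[R]_(m, k))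
    (R3 : 'M[R]_(n, k)) i0 j0 :
  R3 i0 j0 != 0 -> R2^T *m R2 + R3^T *m R3 = C^T *m C ->
  0 < frob C ^+ 2 - frob R2 ^+ 2.
Proof.
move=> R3_neq0 gram3.
have -> : frob C ^+ 2 - frob R2 ^+ 2 = frob R3 ^+ 2.
  by rewrite !frob_sqr -gram3 linearD /=; ring.
exact: frob_sqr_gt0 R3_neq0.
Qed.

End MatrixIdentities.

Theorem theorem3 (R : realType) (N : nat) (B : Type)
  (Phi : 'M[R]_N) (O : B -> 'M[R]_N) (Qbar C : 'M[R]_N)
  (L : R -> B -> 'M[R]_N) (Q : R -> B -> 'M[R]_(N + N))
  (R1 R2 R3 : R -> B -> 'M[R]_N) :
  (0 < N)%N ->
  (forall beta, spd (O beta)) ->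
  spd Qbar ->
  trig_posdiag C -> Qbar = C *m C^T ->
  (forall gt beta, 0 < gt ->
     trig_posdiag (L gt beta) /\ gt^-1 *: O beta = L gt beta *m (L gt beta)^T) ->
  (forall gt beta, 0 < gt ->
     orthogonal_mx (Q gt beta) /\
     upper_posdiag (R1 gt beta) /\ upper_posdiag (R3 gt beta) /\
     block_mx (Phi *m L gt beta) C 1%:M 0
       = Q gt beta *m block_mx (R1 gt beta) (R2 gt beta) 0 (R3 gt beta)) ->
  let K := fun beta => Phi *m O beta *m Phi^T in
  let f := fun gt beta s2 => emf (K beta) Qbar gt s2 in
  let g := fun gt beta =>
    N%:R * ln (frob C ^+ 2 - frob (R2 gt beta) ^+ 2) + 2 * ln (\det (R1 gt beta)) in
  (forall gt beta, 0 < gt -> 0 < frob C ^+ 2 - frob (R2 gt beta) ^+ 2) /\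
  (forall gts betas s2s, 0 < gts -> 0 < s2s ->
     ((forall gt beta s2, 0 < gt -> 0 < s2 -> f gts betas s2s <= f gt beta s2)
      <->
      ((forall gt beta, 0 < gt -> g gts betas <= g gt beta) /\
       s2s = N%:R^-1 * (frob C ^+ 2 - frob (R2 gts betas) ^+ 2)))).
Proof.
move=> N_gt0 _ _ _ Qbar_eq L_fact QR K f g.
pose c p := frob C ^+ 2 - frob (R2 p.1 p.2) ^+ 2.
have c_gt0 (p : R * B) : 0 < p.1 -> 0 < c p.
  move=> gt0; have [orthQ [_ [[_ R3_diag] E]]] := QR _ p.2 gt0.
  have [_ _ gram3] := qr_gram orthQ E.
  pose i0 := Ordinal N_gt0.
  have R3_neq0 : R3 p.1 p.2 i0 i0 != 0 by rewrite gt_eqF.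
  exact: frob_gap_gt0 R3_neq0 gram3.
have f_eq (p : R * B) s2 : 0 < p.1 -> 0 < s2 ->
    f p.1 p.2 s2 = N%:R * ln s2 + 2 * ln (\det (R1 p.1 p.2)) + c p / s2.
  move=> gt0 s2_gt0; have [orthQ [R1_up [_ E]]] := QR _ p.2 gt0.
  exact: emf_profile s2_gt0 Qbar_eq (L_fact _ _ gt0).2 orthQ R1_up E.
split=> [gt beta | gts betas s2s gts0 s2s0]; first exact: (c_gt0 (gt, beta)).
have N_pos : 0 < N%:R :> R by rewrite ltr0n.
have [to_g of_g] := profile_argmin (h := fun p => 2 * ln (\det (R1 p.1 p.2)))
  (F := fun p => f p.1 p.2) (xs := (gts, betas)) N_pos c_gt0 f_eq gts0 s2s0.
split=> [f_ge | [g_ge s2s_eq]].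
  have [g_ge ->] := to_g (fun p s => f_ge p.1 p.2 s).
  by split=> // gt beta; exact: (g_ge (gt, beta)).
move=> gt beta s2; apply: (of_g _ (gt, beta)).
by split=> // p; exact: g_ge.
Qed.
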